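(* Let $m\ge 3$ and let $G=\mathrm{Sp}_{2m}(2)$ act in one of its two $2$-transitive actions (on the set of quadratic forms of $+$ type, respectively of $-$ type, on $\mathbb{F}_2^{2m}$ whose associated bilinear form is the defining symplectic form; degrees $2^{2m-1}+2^{m-1}$ and $2^{2m-1}-2^{m-1}$). Then for any two distinct points $\omega,\omega'$, the setwise stabilizer of $\{\omega,\omega'\}$ splits as a direct product $G(\{\omega,\omega'\}) = G(\omega,\omega')\times\langle s\rangle$, where $s$ is an involution swapping $\omega$ and $\omega'$. Consequently, there is no proper extension of this action to a $2$-by-block-transitive action of $G$.
   Context: A proper extension to a $2$-by-block-transitive action is a $G$-set $\Omega$ with a $G$-equivariant surjection onto the given $G$-set whose fibres (blocks) have size at least $2$, such that $G$ is transitive on ordered pairs of points of $\Omega$ in distinct blocks. *)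

From HB Require Import structures.
From mathcomp Require Import all_boot all_order all_algebra all_fingroup.
Set Implicit Arguments. Unset Strict Implicit. Unset Printing Implicit Defensive.
Import GRing.Theory.

Definition V (m : nat) : finType := 'rV['F_2]_(m + m).

Definition sympB (m : nat) (x y : V m) : 'F_2 :=
  (\sum_(i < m) (x 0 (lshift m i) * y 0 (rshift m i)
                + x 0 (rshift m i) * y 0 (lshift m i)))%R.

Definition Sp_set (m : nat) : {set {perm V m}} :=
  [set g : {perm V m} |
     [forall x : V m, forall y : V m, g (x + y)%R == (g x + g y)%R]
  && [forall a : 'F_2, forall x : V m, g (a *: x)%R == (a *: g x)%R]
  && [forall x : V m, forall y : V m, sympB (g x) (g y) == sympB x y]].

Lemma Sp_group_set m : group_set (Sp_set m).
Proof.
apply/andP; split.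
  rewrite inE; apply/andP; split; first (apply/andP; split).
  - by apply/forallP=> x; apply/forallP=> y; rewrite !perm1.
  - by apply/forallP=> a; apply/forallP=> x; rewrite !perm1.
  - by apply/forallP=> x; apply/forallP=> y; rewrite !perm1.
apply/subsetP=> gh /mulsgP[g h]; rewrite !inE.
move=> /andP[/andP[/forallP Ag /forallP Sg] /forallP Bg].
move=> /andP[/andP[/forallP Ah /forallP Sh] /forallP Bh] ->.
apply/andP; split; first (apply/andP; split).
- apply/forallP=> x; apply/forallP=> y; rewrite !permM.
  by rewrite (eqP (forallP (Ag x) y)) (eqP (forallP (Ah (g x)) (g y))).
- apply/forallP=> a; apply/forallP=> x; rewrite !permM.
  by rewrite (eqP (forallP (Sg a) x)) (eqP (forallP (Sh a) (g x))).
- apply/forallP=> x; apply/forallP=> y; rewrite !permM.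
  by rewrite (eqP (forallP (Bh (g x)) (g y))) (eqP (forallP (Bg x) y)).
Qed.

Canonical Sp (m : nat) : {group {perm V m}} := Group (Sp_group_set m).

Definition is_quad_for_B (m : nat) (Q : {ffun V m -> 'F_2}) : bool :=
  [forall a : 'F_2, forall x : V m, Q (a *: x)%R == (a ^+ 2 * Q x)%R]
  && [forall x : V m, forall y : V m, Q (x + y)%R == (Q x + Q y + sympB x y)%R].

(* Q has a totally singular subspace of dimension k (the row space of a
   k x 2m matrix of full row rank on which Q vanishes). *)
Definition has_tsing (m k : nat) (Q : {ffun V m -> 'F_2}) : bool :=
  [exists W : 'M['F_2]_(k, m + m),
     row_free W && [forall v : 'rV['F_2]_k, Q (v *m W)%R == 0%R]].

(* Witt index m: + type; Witt index m-1: - type. *)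
Definition plus_type (m : nat) (Q : {ffun V m -> 'F_2}) : bool := has_tsing m Q.
Definition minus_type (m : nat) (Q : {ffun V m -> 'F_2}) : bool :=
  has_tsing m.-1 Q && ~~ has_tsing m Q.

Definition Omega (m : nat) (eps : bool) : {set {ffun V m -> 'F_2}} :=
  [set Q | is_quad_for_B Q && (if eps then plus_type Q else minus_type Q)].

Definition formact (m : nat) (Q : {ffun V m -> 'F_2}) (g : {perm V m}) :
  {ffun V m -> 'F_2} := [ffun x => Q ((g^-1)%g x)].

Definition pstab (m : nat) (w w' : {ffun V m -> 'F_2}) : {set {perm V m}} :=
  [set g in Sp m | (formact w g == w) && (formact w' g == w')].
Definition sstab (m : nat) (w w' : {ffun V m -> 'F_2}) : {set {perm V m}} :=
  [set g in Sp m | [set formact w g; formact w' g] == [set w; w']].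

(* A proper extension of the action of Sp m on Omega m eps to a
   2-by-block-transitive action: a G-set T with a G-equivariant surjection
   pi onto Omega whose fibres have size >= 2, with G transitive on ordered
   pairs of points of T lying in distinct blocks. *)
Definition proper_2bbt_extension (m : nat) (eps : bool) (T : finType)
  (to : action (Sp m) T) (pi : T -> {ffun V m -> 'F_2}) : Prop :=
  [/\ forall x, pi x \in Omega m eps,
      forall w, w \in Omega m eps -> exists x, pi x = w,
      forall x g, g \in Sp m -> pi (to x g) = formact (pi x) g,
      forall w, w \in Omega m eps -> 2 <= #|[set x | pi x == w]|
    & forall x y x' y', pi x != pi y -> pi x' != pi y' ->
        exists2 g, g \in Sp m & to x g = x' /\ to y g = y'].

From mathcomp Require Import all_boot all_order all_algebra all_fingroup.
From mathcomp Require Import zify ring.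
Set Implicit Arguments. Unset Strict Implicit. Unset Printing Implicit Defensive.
Import GRing.Theory.
Open Scope ring_scope.

(* Two quadratic forms polarizing to B differ by a linear form B(v, -), and
   the character sum sum_x (-1)^Q(x) equals 2^m or -2^m according to the type
   of Q.  Hence two distinct forms w, w' of the same type satisfy
   w' = w + B(v, -) with w(v) = 0, and the symplectic transvection
   t_v : x |-> x + B(x, v) v is an involution swapping them.  Every g fixing
   both w and w' fixes the form w + w' = B(v, -), hence v, hence commutes
   with t_v; so G({w, w'}) = G(w, w') x <t_v>.  In a proper extension pick x
   over w and y <> x t_v over w'; an element of G mapping (x, x t_v) to (x, y)
   lies in G(w, w'), so it commutes with t_v and maps x t_v to x t_v = y. *)

Lemma F2P (a : 'F_2) : a = 0 \/ a = 1.
Proof. by case: a => [[|[|n]] //= a_lt2]; [left | right]; apply: val_inj. Qed.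

Lemma F2_eq1 (a : 'F_2) : a != 0 -> a = 1.
Proof. by case: (F2P a) => ->. Qed.

Lemma F2_addxx (a : 'F_2) : a + a = 0.
Proof. by case: (F2P a) => ->; apply/eqP. Qed.

Lemma F2_mulxx (a : 'F_2) : a * a = a.
Proof. by case: (F2P a) => ->; rewrite ?mulr0 ?mulr1. Qed.

Lemma V_addxx m (x : V m) : x + x = 0.
Proof. by apply/rowP => j; rewrite !mxE F2_addxx. Qed.

Lemma V_addK m (x y : V m) : x + y + y = x.
Proof. by rewrite -addrA V_addxx addr0. Qed.

Section SymplecticForm.
Variable m : nat.
Implicit Types (x y z u v : V m) (a : 'F_2).

Lemma sympDl x y z : sympB (x + y) z = sympB x z + sympB y z.
Proof.
rewrite /sympB -big_split /=; apply: eq_bigr => i _; rewrite !mxE; ring.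
Qed.

Lemma sympC x y : sympB x y = sympB y x.
Proof. by apply: eq_bigr => i _; rewrite addrC mulrC [X in _ + X]mulrC. Qed.

Lemma sympDr x y z : sympB z (x + y) = sympB z x + sympB z y.
Proof. by rewrite !(sympC z) sympDl. Qed.

Lemma sympZl a x y : sympB (a *: x) y = a * sympB x y.
Proof. rewrite /sympB mulr_sumr; apply: eq_bigr => i _; rewrite !mxE; ring. Qed.

Lemma sympZr a x y : sympB y (a *: x) = a * sympB y x.
Proof. by rewrite !(sympC y) sympZl. Qed.

Lemma sympxx x : sympB x x = 0.
Proof. by rewrite /sympB big1 // => i _; rewrite [X in _ + X]mulrC F2_addxx. Qed.

Lemma symp0l y : sympB 0 y = 0.
Proof. by rewrite -(scale0r 0) sympZl mul0r. Qed.

Lemma symp0r y : sympB y 0 = 0.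
Proof. by rewrite sympC symp0l. Qed.

Lemma symp_rshift u (i : 'I_m) : sympB u 'e_(rshift m i) = u 0 (lshift m i).
Proof.
rewrite /sympB (bigD1 i) //= big1 => [|j ji]; rewrite !mxE /= ?eq_rshift ?eq_lrshift.
  by rewrite eqxx mulr1 mulr0 !addr0.
by rewrite (negbTE ji) !mulr0 addr0.
Qed.

Lemma symp_lshift u (i : 'I_m) : sympB u 'e_(lshift m i) = u 0 (rshift m i).
Proof.
rewrite /sympB (bigD1 i) //= big1 => [|j ji]; rewrite !mxE /= ?eq_lshift ?eq_rlshift.
  by rewrite eqxx mulr1 mulr0 !add0r addr0.
by rewrite (negbTE ji) !mulr0 addr0.
Qed.

Lemma symp_nondeg u : (forall y, sympB u y = 0) -> u = 0.
Proof.
move=> u_perp; apply/rowP => j; rewrite mxE.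
case: (splitP j) => k jk.
  by rewrite (_ : j = lshift m k) -?symp_rshift ?u_perp //; apply: val_inj.
by rewrite (_ : j = rshift m k) -?symp_lshift ?u_perp //; apply: val_inj.
Qed.

Lemma symp_exists1 v : v != 0 -> exists y, sympB y v = 1.
Proof.
move=> v_neq0; suff [y /F2_eq1 yv1] : exists y, sympB y v != 0 by exists y.
apply/existsP; apply: contraR v_neq0; rewrite negb_exists => /forallP v_perp.
by apply/eqP/symp_nondeg => y; rewrite sympC; apply/eqP/negbNE.
Qed.

Lemma symp_represent (f : V m -> 'F_2) : {morph f : x y / x + y} ->
  exists v, forall x, f x = sympB v x.
Proof.
move=> fD; have f0 : f 0 = 0 by apply: (addrI (f 0)); rewrite -fD !addr0.
have fZ a x : f (a *: x) = a * f x.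
  by case: (F2P a) => ->; rewrite ?scale0r ?f0 ?mul0r ?scale1r ?mul1r.
exists (\sum_(i < m) (f 'e_(rshift m i) *: 'e_(lshift m i)
                    + f 'e_(lshift m i) *: 'e_(rshift m i))) => x.
rewrite sympC (big_morph (sympB x) (fun y z => sympDr y z x) (symp0r x)).
rewrite {1}(row_sum_delta x) (big_morph f fD f0) big_split_ord /= -big_split /=.
apply: eq_bigr => i _.
by rewrite sympDr !sympZr symp_lshift symp_rshift !fZ addrC !(mulrC (x 0 _)).
Qed.

End SymplecticForm.

Definition shiftQ m (Q : {ffun V m -> 'F_2}) (v : V m) : {ffun V m -> 'F_2} :=
  [ffun x => Q x + sympB v x].

Section QuadraticForms.
Variable m : nat.
Implicit Types (Q : {ffun V m -> 'F_2}) (x y v : V m).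

Lemma quadZ Q a x : is_quad_for_B Q -> Q (a *: x) = a ^+ 2 * Q x.
Proof. by case/andP => /forallP /(_ a) /forallP /(_ x) /eqP. Qed.

Lemma quadD Q x y : is_quad_for_B Q -> Q (x + y) = Q x + Q y + sympB x y.
Proof. by case/andP => _ /forallP /(_ x) /forallP /(_ y) /eqP. Qed.

Lemma shiftQ_quad Q v : is_quad_for_B Q -> is_quad_for_B (shiftQ Q v).
Proof.
move=> qQ; apply/andP; split; apply/forallP => a; apply/forallP => x; apply/eqP.
  by rewrite !ffunE quadZ // sympZr mulrDr expr2 F2_mulxx.
by rewrite !ffunE quadD // sympDr; ring.
Qed.

Lemma shiftQ_eq Q v : (shiftQ Q v == Q) = (v == 0).
Proof.
apply/eqP/eqP => [/ffunP shift_id | ->].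
  apply: symp_nondeg => y; apply: (addrI (Q y)).
  by rewrite addr0 -[in RHS](shift_id y) ffunE.
by apply/ffunP => x; rewrite ffunE symp0l addr0.
Qed.

Lemma quad_shiftQ Q Q' : is_quad_for_B Q -> is_quad_for_B Q' ->
  exists v, Q' = shiftQ Q v.
Proof.
move=> qQ qQ'; have [v Qv] : exists v, forall x, Q x + Q' x = sympB v x.
  apply: symp_represent => x y; rewrite !quadD //.
  by rewrite -[RHS]addr0 -(F2_addxx (sympB x y)); ring.
by exists v; apply/ffunP => x; rewrite ffunE -Qv addrA F2_addxx add0r.
Qed.

End QuadraticForms.

Definition sgF2 (a : 'F_2) : int := if a == 0 then 1 else -1.

Lemma sgF2D a b : sgF2 (a + b) = sgF2 a * sgF2 b.
Proof. by case: (F2P a) => ->; case: (F2P b) => ->. Qed.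

Definition sign_sum m (Q : V m -> 'F_2) : int := \sum_x sgF2 (Q x).

Definition sperp m (A : {set V m}) : {set V m} :=
  [set x | [forall a in A, sympB x a == 0]].

Lemma card_V m : #|V m| = (2 ^ (m + m))%N.
Proof. by rewrite card_mx card_Fp // mul1n. Qed.

Section SignSums.
Variable m : nat.
Implicit Types (Q : {ffun V m -> 'F_2}) (A : {set V m}) (x v : V m).

Lemma sum_sgF2_morph_eq0 A (chi : V m -> 'F_2) a0 :
    addr_closed A -> {in A &, {morph chi : a b / a + b}} ->
  a0 \in A -> chi a0 != 0 -> \sum_(a in A) sgF2 (chi a) = 0.
Proof.
move=> [_ addA] chiD a0A /F2_eq1 chi_a0.
suff: \sum_(a in A) sgF2 (chi a) = - \sum_(a in A) sgF2 (chi a) by lia.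
have shiftA x : (x + a0 \in A) = (x \in A).
  apply/idP/idP => [xa0A | xA]; last exact: addA.
  by rewrite -(V_addK x a0) addA.
rewrite {1}(reindex_inj (addIr a0)) (eq_bigl (mem A)) => [|x]; last exact: shiftA.
by rewrite -sumrN; apply: eq_bigr => x xA; rewrite chiD // chi_a0 sgF2D mulrN1.
Qed.

Lemma sum_sgF2_symp A x : addr_closed A ->
  \sum_(a in A) sgF2 (sympB x a) = if x \in sperp A then #|A|%:Z else 0.
Proof.
move=> A_closed; case: ifPn => [|x_nperp].
  rewrite inE => /forall_inP x_perp.
  by rewrite (eq_bigr (fun _ => 1)) ?sumr_const -?natz // => a /x_perp /eqP ->.
move: x_nperp; rewrite inE negb_forall => /existsP[a0]; rewrite negb_imply.
by case/andP=> a0A; apply: sum_sgF2_morph_eq0 a0A => // a b _ _; apply: sympDr.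
Qed.

Lemma sperp_setT : sperp [set: V m] = [set 0].
Proof.
apply/setP => x; rewrite !inE; apply/forall_inP/eqP => [x_perp | ->].
  by apply: symp_nondeg => y; apply/eqP/x_perp.
by move=> y _; rewrite symp0l.
Qed.

Lemma card_sperp A : addr_closed A -> (#|A| * #|sperp A| = 2 ^ (m + m))%N.
Proof.
move=> A_closed; apply/eqP; rewrite -eqz_nat PoszM; apply/eqP.
have sumT (a : V m) :
    \sum_x sgF2 (sympB x a) = if a == 0 then (2 ^ (m + m))%N%:Z else 0.
  transitivity (\sum_(x in [set: V m]) sgF2 (sympB a x)).
    by apply: eq_big => [x | x _]; rewrite ?inE // sympC.
  rewrite sum_sgF2_symp; last by split=> [|? ? _ _]; rewrite inE.
  by rewrite sperp_setT inE cardsT card_V.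
transitivity (\sum_x \sum_(a in A) sgF2 (sympB x a)).
  under [RHS]eq_bigr do rewrite sum_sgF2_symp //.
  by rewrite -big_mkcond sumr_const -mulr_natr natz.
rewrite exchange_big (bigD1 0) ?A_closed.1 //= sumT eqxx big1 ?addr0 //.
move=> a /andP[_ a_neq0].
by rewrite sumT (negbTE a_neq0).
Qed.

Lemma sign_sum_shiftQ Q v : is_quad_for_B Q ->
  sign_sum (shiftQ Q v) = sgF2 (Q v) * sign_sum Q.
Proof.
move=> qQ; rewrite /sign_sum (reindex_inj (addIr v)) mulr_sumr.
apply: eq_bigr => x _; rewrite ffunE !quadD // sympDr sympxx addr0 (sympC v x).
by rewrite -addrA F2_addxx addr0 sgF2D mulrC.
Qed.

(* Average over the translates by A: the sum over A of (-1)^B(x, a) vanishes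
   unless x is orthogonal to A. *)
Lemma sign_sum_sperp Q A : addr_closed A -> is_quad_for_B Q ->
  {in A, forall a, Q a = 0} -> sign_sum Q = \sum_(x in sperp A) sgF2 (Q x).
Proof.
move=> A_closed qQ QA; have A_gt0 : (0 < #|A|)%N.
  by apply/card_gt0P; exists 0; apply: A_closed.1.
apply: (@mulfI _ #|A|%:Z); first by rewrite eqz_nat -lt0n.
have shift_sum a : a \in A -> sign_sum Q = \sum_x sgF2 (Q x) * sgF2 (sympB x a).
  move=> aA; rewrite /sign_sum (reindex_inj (addIr a)); apply: eq_bigr => x _.
  by rewrite quadD // (QA a) // addr0 sgF2D.
rewrite -natz mulr_natl -sumr_const (eq_bigr _ shift_sum) exchange_big /=.
rewrite natz mulr_sumr [RHS]big_mkcond /=.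
apply: eq_bigr => x _; rewrite -mulr_sumr sum_sgF2_symp //.
by case: ifP => _; rewrite ?mulr0 // mulrC.
Qed.

End SignSums.

Definition span_rows m k (W : 'M['F_2]_(k, m + m)) : {set V m} :=
  [set u *m W | u : 'rV_k].

Lemma span_rows_closed m k (W : 'M['F_2]_(k, m + m)) : addr_closed (span_rows W).
Proof.
split=> [|_ _ /imsetP[u _ ->] /imsetP[u' _ ->]]; apply/imsetP.
  by exists 0; rewrite ?mul0mx.
by exists (u + u'); rewrite ?mulmxDl.
Qed.

Lemma card_span_rows m k (W : 'M['F_2]_(k, m + m)) :
  row_free W -> #|span_rows W| = (2 ^ k)%N.
Proof.
by move=> W_free; rewrite card_imset ?card_mx ?card_Fp ?mul1n //; apply: row_free_inj.
Qed.

Lemma row1_split k (u : 'rV['F_2]_(1 + k)) : u = row_mx (u 0 ord0)%:M (rsubmx u).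
Proof.
rewrite -{1}(hsubmxK u) [lsubmx u]mx11_scalar; congr (row_mx _%:M _).
by rewrite mxE; congr (u _ _); apply/val_inj.
Qed.

Section TotallySingular.
Variables (m : nat) (Q : {ffun V m -> 'F_2}).
Hypothesis qQ : is_quad_for_B Q.

Lemma tsingP k : reflect
  (exists2 W : 'M['F_2]_(k, m + m), row_free W & forall u, Q (u *m W) = 0)
  (has_tsing k Q).
Proof.
apply: (iffP existsP) => [[W /andP[W_free /forallP QW]] | [W W_free QW]].
  by exists W => // u; apply/eqP.
by exists W; rewrite W_free; apply/forallP => u; rewrite QW.
Qed.

Lemma tsing_sub_sperp k (W : 'M['F_2]_(k, m + m)) : (forall u, Q (u *m W) = 0) ->
  span_rows W \subset sperp (span_rows W).
Proof.
move=> QW; apply/subsetP => _ /imsetP[u _ ->]; rewrite inE.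
apply/forall_inP => _ /imsetP[u' _ ->]; have := quadD (u *m W) (u' *m W) qQ.
by rewrite -mulmxDl !QW !add0r => <-.
Qed.

Lemma sign_sum_tsing k (W : 'M['F_2]_(k, m + m)) : (forall u, Q (u *m W) = 0) ->
  sign_sum Q = \sum_(x in sperp (span_rows W)) sgF2 (Q x).
Proof.
move=> QW; apply: sign_sum_sperp (span_rows_closed W) qQ _.
by move=> _ /imsetP[u _ ->].
Qed.

Lemma sign_sum_plus_type : plus_type Q -> sign_sum Q = (2 ^ m)%N%:Z.
Proof.
case/tsingP => W W_free QW; have card_W := card_span_rows W_free.
have card_W_perp : #|sperp (span_rows W)| = (2 ^ m)%N.
  apply/eqP; rewrite -(eqn_pmul2l (expn_gt0 2 m)) -{1}card_W.
  by rewrite card_sperp ?expnD //; apply: span_rows_closed.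
have W_perp : span_rows W = sperp (span_rows W).
  by apply/eqP; rewrite eqEcard tsing_sub_sperp // card_W card_W_perp leqnn.
rewrite (sign_sum_tsing QW) -W_perp (eq_bigr (fun _ => 1)) => [|_ /imsetP[u _ ->]].
  by rewrite sumr_const card_W natz.
by rewrite QW.
Qed.

Lemma tsing_extend k (W : 'M['F_2]_(k, m + m)) x :
    row_free W -> (forall u, Q (u *m W) = 0) ->
  x \in sperp (span_rows W) -> x \notin span_rows W -> Q x = 0 -> has_tsing k.+1 Q.
Proof.
move=> W_free QW; rewrite inE => /forall_inP x_perp x_notin_W Qx.
have inW u : u *m W \in span_rows W by apply/imsetP; exists u.
apply/tsingP; exists (col_mx x W : 'M_(1 + k, _)) => [|u].
  rewrite -kermx_eq0; apply/rowV0P => u /sub_kermxP.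
  rewrite (row1_split u) (mul_row_col (n1:=1) (n2:=k)) mul_scalar_mx.
  case: (F2P (u 0 ord0)) => ->; last first.
    rewrite scale1r => /eqP; rewrite addr_eq0 => /eqP x_eq.
    by case/negP: x_notin_W; rewrite x_eq -mulNmx inW.
  rewrite scale0r add0r => uW0.
  have -> : rsubmx (u : 'rV_(1 + k)) = 0.
    by apply: (row_free_inj W_free); rewrite uW0 mul0mx.
  by rewrite raddf0 row_mx0.
rewrite (row1_split u) (mul_row_col (n1:=1) (n2:=k)) mul_scalar_mx.
by rewrite quadD // quadZ // Qx QW sympZl (eqP (x_perp _ (inW _))) !mulr0 !addr0.
Qed.

Lemma sign_sum_minus_type : (0 < m)%N -> minus_type Q -> sign_sum Q = - (2 ^ m)%N%:Z.
Proof.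
move=> m_gt0 /andP[/tsingP[W W_free QW] not_plus]; set k := m.-1 in W W_free QW.
have m_eq : m = k.+1 by rewrite prednK.
have card_W := card_span_rows W_free; have W_sub := tsing_sub_sperp QW.
have card_W_perp : #|sperp (span_rows W)| = (2 ^ k * 4)%N.
  apply/eqP; rewrite -(eqn_pmul2l (expn_gt0 2 k)) -{1}card_W.
  rewrite card_sperp; last exact: span_rows_closed.
  by rewrite m_eq addSn addnS !expnS expnD; apply/eqP; ring.
have Q_out x : x \in sperp (span_rows W) :\: span_rows W -> Q x = 1.
  case/setDP=> x_perp x_notin_W; apply: F2_eq1; apply: contra not_plus => /eqP Qx.
  rewrite [X in has_tsing X]m_eq.
  exact: (tsing_extend W_free QW x_perp x_notin_W Qx).
rewrite (sign_sum_tsing QW) (big_setID (span_rows W)) /= (setIidPr W_sub).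
rewrite (eq_bigr (fun _ => 1)) => [|_ /imsetP[u _ ->]]; last by rewrite QW.
rewrite [X in _ + X](eq_bigr (fun _ => -1)) => [|x /Q_out ->] //.
rewrite !sumr_const cardsD (setIidPr W_sub) card_W card_W_perp m_eq mulNrn !natz.
have := expn_gt0 2 k; rewrite expnS; lia.
Qed.

End TotallySingular.

Lemma Omega_quad m eps w : w \in Omega m eps -> is_quad_for_B w.
Proof. by rewrite inE => /andP[]. Qed.

Lemma sign_sum_Omega m eps w : (0 < m)%N -> w \in Omega m eps ->
  sign_sum w = (if eps then 1 else -1) * (2 ^ m)%N%:Z.
Proof.
move=> m_gt0 wO; have qw := Omega_quad wO; move: wO; rewrite inE => /andP[_].
case: eps => [/(sign_sum_plus_type qw) -> | /(sign_sum_minus_type qw m_gt0) ->].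
  by rewrite mul1r.
by rewrite mulN1r.
Qed.

(* Both forms have the same sign sum, so the twist sgF2 (w v) must be trivial. *)
Lemma Omega_shiftQ m eps w w' : (0 < m)%N ->
  w \in Omega m eps -> w' \in Omega m eps -> w != w' ->
  exists v, [/\ v != 0, w v = 0 & w' = shiftQ w v].
Proof.
move=> m_gt0 wO w'O w_neq_w'; have qw := Omega_quad wO.
have [v w'_eq] := quad_shiftQ qw (Omega_quad w'O).
exists v; split=> //; first by rewrite -(shiftQ_eq w) -w'_eq eq_sym.
apply/eqP; apply: contraT => /F2_eq1 wv1.
have := sign_sum_shiftQ v qw; rewrite -w'_eq wv1 (_ : sgF2 1 = -1) //.
rewrite (sign_sum_Omega m_gt0 wO) (sign_sum_Omega m_gt0 w'O).
by have := expn_gt0 2 m; case: (eps) => /=; lia.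
Qed.

Lemma cycle_invol (gT : finGroupType) (g : gT) :
  (g ^+ 2)%g = 1%g -> <[g]>%g = [set 1; g]%g.
Proof.
move=> g2; apply/eqP; rewrite eqEsubset; apply/andP; split; last first.
  by apply/subsetP => c; rewrite !inE => /orP[] /eqP ->; rewrite ?group1 ?cycle_id.
apply/subsetP => _ /cycleP[i ->]; rewrite -(expg_mod _ g2) !inE.
have : (i %% 2 < 2)%N by rewrite ltn_pmod.
by case: (i %% 2)%N => [|[|//]] _; rewrite ?expg0 ?expg1 eqxx ?orbT.
Qed.

Section SymplecticGroup.
Variable m : nat.
Implicit Types (w : {ffun V m -> 'F_2}) (g h : {perm V m}) (x y : V m).

Lemma SpD g x y : g \in Sp m -> g (x + y) = g x + g y.
Proof. by rewrite inE => /andP[/andP[/forallP /(_ x) /forallP /(_ y) /eqP]]. Qed.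

Lemma SpZ g a x : g \in Sp m -> g (a *: x) = a *: g x.
Proof. by rewrite inE => /andP[/andP[_ /forallP /(_ a) /forallP /(_ x) /eqP]]. Qed.

Lemma Sp_symp g x y : g \in Sp m -> sympB (g x) (g y) = sympB x y.
Proof. by rewrite inE => /andP[_ /forallP /(_ x) /forallP /(_ y) /eqP]. Qed.

Lemma formactE w g x : formact w g x = w ((g^-1)%g x).
Proof. by rewrite ffunE. Qed.

Lemma formact1 w : formact w 1%g = w.
Proof. by apply/ffunP => x; rewrite !ffunE invg1 perm1. Qed.

Lemma formactM w g h : formact (formact w g) h = formact w (g * h)%g.
Proof. by apply/ffunP => x; rewrite !ffunE invMg permM. Qed.

Lemma formact_invol w s : (s ^+ 2 = 1)%g -> formact (formact w s) s = w.
Proof. by move=> s2; rewrite formactM -{2}(expg1 s) -expgS s2 formact1. Qed.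

Lemma formact_inj g : injective (fun w => formact w g).
Proof.
move=> w w' eq_wg; rewrite -(formact1 w) -(formact1 w') -(mulgV g).
by rewrite -!formactM /= eq_wg.
Qed.

Lemma pstabE w w' g :
  (g \in pstab w w') = [&& g \in Sp m, formact w g == w & formact w' g == w'].
Proof. by rewrite in_set. Qed.

Lemma sstabE w w' g :
  (g \in sstab w w') = (g \in Sp m) && ([set formact w g; formact w' g] == [set w; w']).
Proof. by rewrite in_set. Qed.

Lemma pstab_group_set w w' : group_set (pstab w w').
Proof.
apply/group_setP; split; first by rewrite pstabE group1 !formact1 !eqxx.
move=> g h; rewrite !pstabE.
move=> /and3P[gS /eqP wg /eqP w'g] /and3P[hS /eqP wh /eqP w'h].
by rewrite groupM // -!formactM wg w'g wh w'h !eqxx.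
Qed.

Canonical pstab_group w w' := Group (pstab_group_set w w').

Lemma sstab_dprod w w' s : w != w' -> s \in Sp m -> (s ^+ 2)%g = 1%g ->
    formact w s = w' -> {in pstab w w', forall g, commute s g} ->
  (pstab w w' \x <[s]>)%g = sstab w w'.
Proof.
move=> w_neq_w' sS s2 ws s_cent.
have ss : (s * s = 1)%g by rewrite -s2 expgS expg1.
have w's : formact w' s = w by rewrite -ws formact_invol.
have s_sub : <[s]>%g \subset 'C(pstab w w')%g.
  by rewrite cycle_subG; apply/centP => g /s_cent.
have tI : (pstab w w' :&: <[s]> = 1)%g.
  apply/eqP; rewrite eqEsubset sub1G andbT; apply/subsetP => c.
  rewrite in_setI cycle_invol // in_set2 => /andP[c_pstab /orP[] /eqP c_eq].
    by rewrite c_eq group1.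
  by move: c_pstab; rewrite c_eq pstabE ws eq_sym (negbTE w_neq_w') andbF.
rewrite (dprodE s_sub tI) /= cycle_invol //; apply/setP => g; rewrite sstabE.
apply/idP/andP => [/mulsgP[h c /[!pstabE] /and3P[hS /eqP wh /eqP w'h] c_s ->] | [gS]].
  rewrite -!formactM wh w'h; case/set2P: c_s => ->.
    by rewrite mulg1 hS !formact1.
  by rewrite groupM // ws w's setUC.
move=> /eqP wg_eq; have wg : formact w g \in [set w; w'] by rewrite -wg_eq set21.
have w'g : formact w' g \in [set w; w'] by rewrite -wg_eq set22.
move: wg w'g; rewrite !inE => /orP[] /eqP wg /orP[] /eqP w'g;
  try by case/eqP: w_neq_w'; apply: (@formact_inj g); rewrite wg w'g.
  by apply/mulsgP; exists g 1%g; rewrite ?mulg1 ?set21 // pstabE gS wg w'g !eqxx.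
apply/mulsgP; exists (g * s)%g s; rewrite ?set22 -?mulgA ?ss ?mulg1 //.
by rewrite pstabE groupM // -!formactM wg w'g ws w's !eqxx.
Qed.

End SymplecticGroup.

Section Transvection.
Variables (m : nat) (v : V m).
Implicit Types (w : {ffun V m -> 'F_2}) (g : {perm V m}) (x y : V m).

Definition transv_fun x : V m := x + sympB x v *: v.

Lemma transv_funK : involutive transv_fun.
Proof.
move=> x; rewrite /transv_fun sympDl sympZl sympxx mulr0 addr0 -addrA -scalerDl.
by rewrite F2_addxx scale0r addr0.
Qed.

Definition transv : {perm V m} := perm (inv_inj transv_funK).

Lemma transvE x : transv x = x + sympB x v *: v.
Proof. by rewrite permE. Qed.

Lemma transv_Sp : transv \in Sp m.
Proof.
rewrite inE; apply/andP; split; first (apply/andP; split).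
- apply/forallP => x; apply/forallP => y; apply/eqP.
  by rewrite !transvE sympDl scalerDl addrACA.
- by apply/forallP => a; apply/forallP => x; rewrite !transvE sympZl scalerDr scalerA.
- apply/forallP => x; apply/forallP => y; apply/eqP; rewrite !transvE.
  rewrite !sympDl !sympDr !sympZl !sympZr sympxx (sympC v y) !mulr0 addr0.
  by rewrite (mulrC (sympB y v)) -addrA F2_addxx addr0.
Qed.

Lemma transv_sqr : (transv ^+ 2)%g = 1%g.
Proof. by apply/permP => x; rewrite expgS expg1 permM perm1 !permE transv_funK. Qed.

Lemma transvV : (transv^-1)%g = transv.
Proof. by rewrite -[LHS]mulg1 -transv_sqr expgS expg1 mulKg. Qed.

Lemma transv_neq1 : v != 0 -> transv != 1%g.
Proof.
move=> v_neq0; have [y yv1] := symp_exists1 v_neq0.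
apply: contra v_neq0 => /eqP/permP/(_ y); rewrite perm1 transvE yv1 scale1r.
by move/(canRL (addKr y)); rewrite addNr => <-.
Qed.

Lemma formact_transv w : is_quad_for_B w -> w v = 0 ->
  formact w transv = shiftQ w v.
Proof.
move=> qw wv0; apply/ffunP => x; rewrite formactE transvV transvE !ffunE.
by rewrite quadD // quadZ // wv0 mulr0 addr0 sympZr F2_mulxx sympC.
Qed.

Lemma transv_commute g : g \in Sp m -> g v = v -> commute transv g.
Proof.
move=> gS gv; apply/permP => x.
by rewrite !permM !transvE SpD // SpZ // gv -{3}gv Sp_symp.
Qed.

(* g fixes w and w + B(v, -), hence fixes the linear form B(v, -), hence v. *)
Lemma pstab_shiftQ_fix w g : g \in pstab w (shiftQ w v) -> g v = v.
Proof.
rewrite pstabE => /and3P[gS /eqP wg /eqP w'g].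
suff gv_v : g v + v = 0 by rewrite -(V_addK (g v) v) gv_v add0r.
apply: symp_nondeg => y; rewrite sympDl -{1}(permKV g y) Sp_symp //.
have Bv z : sympB v z = w z + shiftQ w v z by rewrite ffunE addrA F2_addxx add0r.
by rewrite !Bv -!formactE wg w'g F2_addxx.
Qed.

Lemma transv_cent_pstab w :
  {in pstab w (shiftQ w v), forall g, commute transv g}.
Proof.
move=> g g_pstab; apply: transv_commute (pstab_shiftQ_fix g_pstab).
by move: g_pstab; rewrite pstabE => /andP[].
Qed.

End Transvection.

Lemma Omega_transv_swap m eps w w' : (0 < m)%N ->
    w \in Omega m eps -> w' \in Omega m eps -> w != w' ->
  exists v, [/\ transv v != 1%g, formact w (transv v) = w'
            & {in pstab w w', forall g, commute (transv v) g}].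
Proof.
move=> m_gt0 wO w'O w_neq_w'.
have [v [v_neq0 wv0 ->]] := Omega_shiftQ m_gt0 wO w'O w_neq_w'.
exists v; rewrite transv_neq1 // formact_transv ?(Omega_quad wO) //.
by split=> //; apply: transv_cent_pstab.
Qed.

Lemma no_proper_2bbt_extension m eps (w w' : {ffun V m -> 'F_2}) s
    (T : finType) (to : action (Sp m) T) (pi : T -> {ffun V m -> 'F_2}) :
    w \in Omega m eps -> w' \in Omega m eps -> w != w' -> s \in Sp m ->
    formact w s = w' -> {in pstab w w', forall g, commute s g} ->
  ~ proper_2bbt_extension eps to pi.
Proof.
move=> wO w'O w_neq_w' sS ws s_cent [_ pi_onto pi_equiv fibre_big transitive].
have [x pix] := pi_onto _ wO.
have pixs : pi (to x s) = w' by rewrite pi_equiv // pix.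
have [y [piy y_neq]] : exists y, pi y = w' /\ y != to x s.
  have /card_gt1P[y1 [y2 [/[!inE] /eqP piy1 /eqP piy2 y12]]] := fibre_big _ w'O.
  case: (eqVneq y1 (to x s)) => [y1_eq | ]; last by exists y1.
  by exists y2; rewrite -y1_eq eq_sym.
have [g gS [gx gxs]] : exists2 g, g \in Sp m & to x g = x /\ to (to x s) g = y.
  by apply: transitive; rewrite ?pix ?pixs ?piy.
have g_pstab : g \in pstab w w'.
  by rewrite pstabE gS -pix -pi_equiv // gx -{1}pixs -pi_equiv // gxs piy pix !eqxx.
by case/eqP: y_neq; rewrite -gxs -actMin // (s_cent g g_pstab) actMin // gx.
Qed.

Lemma minus_type_sign_sum m (Q : {ffun V m -> 'F_2}) :
  is_quad_for_B Q -> has_tsing m.-1 Q -> sign_sum Q < 0 -> minus_type Q.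
Proof.
move=> qQ tsQ sQ_lt0; rewrite /minus_type tsQ; apply: contraL sQ_lt0.
by move/(sign_sum_plus_type qQ) ->; lia.
Qed.

Definition hypQ m : {ffun V m -> 'F_2} :=
  [ffun x : V m => \sum_(i < m) x 0 (lshift m i) * x 0 (rshift m i)].

Lemma hypQ_quad m : is_quad_for_B (hypQ m).
Proof.
apply/andP; split; apply/forallP => a; apply/forallP => x; apply/eqP; rewrite !ffunE.
  by rewrite mulr_sumr; apply: eq_bigr => i _; rewrite !mxE; ring.
by rewrite /sympB -!big_split /=; apply: eq_bigr => i _; rewrite !mxE; ring.
Qed.

Lemma hypQ_lshift m (x : V m) : (forall i, x 0 (rshift m i) = 0) -> hypQ m x = 0.
Proof. by move=> x_r; rewrite ffunE big1 // => i _; rewrite x_r mulr0. Qed.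

Definition lagrW m : 'M['F_2]_(m, m + m) := row_mx 1%:M 0.

Lemma lagrW_free m : row_free (lagrW m).
Proof.
rewrite -kermx_eq0; apply/rowV0P => u /sub_kermxP.
by rewrite mul_mx_row mulmx1 mulmx0 -row_mx0 => /eq_row_mx[].
Qed.

Lemma lagrW_rshift m (u : 'rV_m) i : (u *m lagrW m) 0 (rshift m i) = 0.
Proof. by rewrite mul_mx_row mulmx0 row_mxEr mxE. Qed.

Lemma shiftQ_hypQ_plus m i : plus_type (shiftQ (hypQ m) 'e_(lshift m i)).
Proof.
apply/tsingP; exists (lagrW m) => [|u]; first exact: lagrW_free.
rewrite ffunE hypQ_lshift => [|j]; last exact: lagrW_rshift.
by rewrite sympC symp_lshift lagrW_rshift add0r.
Qed.

Lemma hypQ_plus m : plus_type (hypQ m).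
Proof.
apply/tsingP; exists (lagrW m) => [|u]; first exact: lagrW_free.
exact/hypQ_lshift/lagrW_rshift.
Qed.

Lemma Omega_plus_two_points m : (0 < m)%N ->
  exists w w', [/\ w \in Omega m true, w' \in Omega m true & w != w'].
Proof.
move=> m_gt0; set e := 'e_(lshift m (Ordinal m_gt0)) : V m.
exists (hypQ m), (shiftQ (hypQ m) e); rewrite !inE shiftQ_quad ?hypQ_quad //.
rewrite hypQ_plus shiftQ_hypQ_plus eq_sym shiftQ_eq; split=> //.
by apply/eqP => /rowP/(_ (lshift m (Ordinal m_gt0))); rewrite !mxE eqxx.
Qed.

Definition lagrW1 k : 'M['F_2]_(k, k.+1 + k.+1) :=
  row_mx (row_mx (0 : 'M_(k, 1)) 1%:M : 'M_(k, 1 + k)) 0.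

Lemma lagrW1_free k : row_free (lagrW1 k).
Proof.
rewrite -kermx_eq0; apply/rowV0P => u /sub_kermxP.
rewrite mul_mx_row mulmx0 (mul_mx_row (p1:=1) (p2:=k)) mulmx0 mulmx1.
rewrite -row_mx0 => /eq_row_mx[/rowP u_eq0 _]; apply/rowP => i.
by have := u_eq0 (rshift 1 i); rewrite (@row_mxEr _ 1 1 k) !mxE.
Qed.

Lemma lagrW1_rshift k (u : 'rV_k) i : (u *m lagrW1 k) 0 (rshift k.+1 i) = 0.
Proof. by rewrite mul_mx_row mulmx0 (row_mxEr (n1:=1+k)) mxE. Qed.

Lemma lagrW1_lshift0 k (u : 'rV_k) : (u *m lagrW1 k) 0 (lshift k.+1 ord0) = 0.
Proof.
rewrite mul_mx_row mulmx0 (row_mxEl (n1:=1+k)) (mul_mx_row (p1:=1) (p2:=k)) mulmx0.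
by rewrite (_ : ord0 = lshift k (ord0 : 'I_1)) ?row_mxEl ?mxE //; apply/val_inj.
Qed.

(* The hyperbolic form twisted by the anisotropic vector e_0 + f_0: Witt index k. *)
Definition ellQ k : {ffun V k.+1 -> 'F_2} :=
  shiftQ (hypQ k.+1) ('e_(lshift k.+1 ord0) + 'e_(rshift k.+1 ord0)).

Lemma ellQ_quad k : is_quad_for_B (ellQ k).
Proof. exact/shiftQ_quad/hypQ_quad. Qed.

Lemma ellQ_lagrW1 k (u : 'rV_k) : ellQ k (u *m lagrW1 k) = 0.
Proof.
rewrite ffunE hypQ_lshift => [|i]; last exact: lagrW1_rshift.
rewrite sympDl !(sympC _ (u *m _)) symp_lshift symp_rshift.
by rewrite lagrW1_rshift lagrW1_lshift0 !add0r.
Qed.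

Lemma sign_sum_ellQ k : sign_sum (ellQ k) = - (2 ^ k.+1)%N%:Z.
Proof.
rewrite sign_sum_shiftQ ?hypQ_quad // (sign_sum_plus_type (hypQ_quad _) (hypQ_plus _)).
rewrite ffunE (bigD1 ord0) //= big1 => [|i i_neq0].
  by rewrite !mxE !eqxx eq_lrshift eq_rlshift /= addr0 add0r mulr1 addr0 mulN1r.
rewrite !mxE eq_lrshift eq_rlshift !eq_lshift !eq_rshift (negbTE i_neq0).
by rewrite !addr0 mulr0.
Qed.

Lemma Omega_minus_two_points k : (0 < k)%N ->
  exists w w', [/\ w \in Omega k.+1 false, w' \in Omega k.+1 false & w != w'].
Proof.
move=> k_gt0; set i1 := Ordinal (k_gt0 : 1 < k.+1)%N.
set e := 'e_(lshift k.+1 i1) : V k.+1.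
have ellQ_e : ellQ k e = 0.
  rewrite ffunE hypQ_lshift => [|i]; last by rewrite !mxE eq_rlshift.
  by rewrite sympDl !symp_lshift !mxE eq_rlshift eq_rshift /= !addr0.
have tsing_e : has_tsing k (shiftQ (ellQ k) e).
  apply/tsingP; exists (lagrW1 k) => [|u]; first exact: lagrW1_free.
  by rewrite ffunE ellQ_lagrW1 sympC symp_lshift lagrW1_rshift addr0.
have tsing_ellQ : has_tsing k (ellQ k).
  by apply/tsingP; exists (lagrW1 k); [exact: lagrW1_free | exact: ellQ_lagrW1].
have sign_lt0 : sign_sum (ellQ k) < 0.
  by rewrite sign_sum_ellQ; have := expn_gt0 2 k.+1; lia.
exists (ellQ k), (shiftQ (ellQ k) e); rewrite !inE shiftQ_quad ?ellQ_quad //=; split.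
- exact: minus_type_sign_sum (ellQ_quad k) tsing_ellQ sign_lt0.
- apply: minus_type_sign_sum (shiftQ_quad _ (ellQ_quad k)) tsing_e _.
  by rewrite sign_sum_shiftQ ?ellQ_quad // ellQ_e mul1r.
- rewrite eq_sym shiftQ_eq; apply/eqP => /rowP/(_ (lshift k.+1 i1)).
  by rewrite !mxE eqxx.
Qed.

Lemma Omega_two_points m eps : (1 < m)%N ->
  exists w w', [/\ w \in Omega m eps, w' \in Omega m eps & w != w'].
Proof.
case: m => // k k_gt0; case: eps; first exact: Omega_plus_two_points.
exact: Omega_minus_two_points.
Qed.

Close Scope ring_scope.

Theorem lemma3p7 (m : nat) (eps : bool) : 3 <= m ->
  (forall w w' : {ffun V m -> 'F_2},
      w \in Omega m eps -> w' \in Omega m eps -> w != w' ->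
      exists2 s : {perm V m}, s \in Sp m &
        [/\ s != 1%g, (s ^+ 2)%g = 1%g, formact w s = w', formact w' s = w
          & (pstab w w' \x <[s]>)%g = sstab w w'])
  /\ (forall (T : finType) (to : action (Sp m) T) (pi : T -> {ffun V m -> 'F_2}),
        ~ proper_2bbt_extension eps to pi).
Proof.
move=> m_ge3; have m_gt1 : (1 < m)%N by lia.
split=> [w w' wO w'O w_neq_w' | T to pi].
  have [v [s_neq1 ws s_cent]] := Omega_transv_swap (ltnW m_gt1) wO w'O w_neq_w'.
  exists (transv v); first exact: transv_Sp.
  split=> //; first exact: transv_sqr.
    by rewrite -ws formact_invol ?transv_sqr.
  exact: sstab_dprod w_neq_w' (transv_Sp v) (transv_sqr v) ws s_cent.
have [w [w' [wO w'O w_neq_w']]] := Omega_two_points eps m_gt1.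
have [v [_ ws s_cent]] := Omega_transv_swap (ltnW m_gt1) wO w'O w_neq_w'.
exact: no_proper_2bbt_extension wO w'O w_neq_w' (transv_Sp v) ws s_cent.
Qed.
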